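(* Let $\Gamma$ be an uncountable set and $Z=\ell_2(\Gamma)$. Let $\theta:\mathbb{R}\to[0,\infty)$, $\theta(t)=0$ for $t\le0$ and $\theta(t)=t^2$ for $t\ge0$, and define $f:Z\to\mathbb{R}$ by $f(x)=\sum_{\gamma\in\Gamma}\theta(x_\gamma)$. Then $f$ is a continuous convex function with $0\le f(x)\le\|x\|^2$, $f$ is not constant on any line $\{x+tv:t\in\mathbb{R}\}$ with $v\neq0$ (so that the subspace $Y_f=\{v\in Z: f(tv)-f(0)-\langle 0,tv\rangle=0\ \forall t\}$ equals $\{0\}$), and yet there is no continuous linear form $\ell:Z\to\mathbb{R}$ such that $f-\ell$ is directionally coercive.
   Context: $\ell_2(\Gamma)$ is the Hilbert space of all $x:\Gamma\to\mathbb{R}$, written $x=(x_\gamma)_{\gamma\in\Gamma}$, with $\sum_{\gamma\in\Gamma}|x_\gamma|^2<\infty$, norm $\|x\|=(\sum_\gamma|x_\gamma|^2)^{1/2}$ and inner product $\langle x,y\rangle=\sum_\gamma x_\gamma y_\gamma$. A function $g$ on $Z$ is directionally coercive if $\lim_{t\to\infty}g(x+tv)=\infty$ for all $x\in Z$, $v\in Z\setminus\{0\}$. *)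

From Stdlib Require Import Reals Lra List ClassicalEpsilon.
Open Scope R_scope.

Definition fsum {G : Type} (l : list G) (a : G -> R) : R :=
  fold_right (fun g acc => a g + acc) 0 l.

(* Unconditional summability over an arbitrary index set:
   the net of finite (duplicate-free) partial sums converges to s. *)
Definition has_sum {G : Type} (a : G -> R) (s : R) : Prop :=
  forall eps, 0 < eps ->
    exists F0 : list G, NoDup F0 /\
      forall F : list G, NoDup F -> incl F0 F -> Rabs (fsum F a - s) < eps.

(* The sum sum_{g in G} a g (meaningful when a is summable). *)
Definition tsum {G : Type} (a : G -> R) : R :=
  epsilon (inhabits 0) (fun s => has_sum a s).

Definition l2 {G : Type} (x : G -> R) : Prop :=
  exists s, has_sum (fun g => (x g) ^ 2) s.

Definition l2norm {G : Type} (x : G -> R) : R := sqrt (tsum (fun g => (x g) ^ 2)).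
Definition l2inner {G : Type} (x y : G -> R) : R := tsum (fun g => x g * y g).

Definition vzero {G : Type} : G -> R := fun _ => 0.
Definition vadd {G : Type} (x y : G -> R) : G -> R := fun g => x g + y g.
Definition vscal {G : Type} (c : R) (x : G -> R) : G -> R := fun g => c * x g.
Definition vsub {G : Type} (x y : G -> R) : G -> R := fun g => x g - y g.

Definition theta (t : R) : R := if Rle_dec t 0 then 0 else t ^ 2.

Definition fth {G : Type} (x : G -> R) : R := tsum (fun g => theta (x g)).

Definition l2_continuous {G : Type} (h : (G -> R) -> R) : Prop :=
  forall x, l2 x -> forall eps, 0 < eps -> exists delta, 0 < delta /\
    forall y, l2 y -> l2norm (vsub y x) < delta -> Rabs (h y - h x) < eps.

Definition l2_convex {G : Type} (h : (G -> R) -> R) : Prop :=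
  forall x y, l2 x -> l2 y -> forall lam, 0 <= lam <= 1 ->
    h (vadd (vscal lam x) (vscal (1 - lam) y)) <= lam * h x + (1 - lam) * h y.

Definition l2_linear {G : Type} (h : (G -> R) -> R) : Prop :=
  (forall x y, l2 x -> l2 y -> h (vadd x y) = h x + h y) /\
  (forall c x, l2 x -> h (vscal c x) = c * h x).

Definition l2_dir_coercive {G : Type} (h : (G -> R) -> R) : Prop :=
  forall x v, l2 x -> l2 v -> (exists g, v g <> 0) ->
    forall M, exists T, forall t, t >= T -> h (vadd x (vscal t v)) > M.

Definition uncountable (G : Type) : Prop :=
  ~ exists e : G -> nat, forall a b, e a = e b -> a = b.

From Stdlib Require Import Reals Lra List Permutation ClassicalEpsilon FunctionalExtensionality Cantor.
Open Scope R_scope.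

(* Coordinatewise, theta is convex, 0 <= theta t <= t^2 and
   |theta a - theta b| <= (1 + 1/c) (a - b)^2 + c b^2; summing these over Gamma gives that
   f is finite, convex, bounded by the squared norm and continuous.  Along a line x + t v
   with v_g <> 0 the single coordinate g already makes f unbounded, so f is nowhere
   constant on lines.
   If l were a continuous linear form with f - l directionally coercive, then, since f
   vanishes on the negative cone, coercivity along -e_g forces l(e_g) > 0 for every g.
   Continuity of l at 0 bounds the number k of coordinates with l(e_g) >= c: on a
   multiple of the indicator of k such coordinates l grows like sqrt k times the norm.
   So Gamma is a countable union of finite sets, contradicting its uncountability. *)

Section FiniteSums.
Variable G : Type.
Implicit Types (l : list G) (a b : G -> R).

Lemma fsum_app l1 l2 a : fsum (l1 ++ l2) a = fsum l1 a + fsum l2 a.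
Proof. induction l1 as [|g l1 IH]; simpl; [lra|]. unfold fsum in *; simpl; rewrite IH; lra. Qed.

Lemma fsum_perm l1 l2 a : Permutation l1 l2 -> fsum l1 a = fsum l2 a.
Proof. intros H; induction H; unfold fsum in *; simpl; lra. Qed.

Lemma fsum_ext_in l a b : (forall g, In g l -> a g = b g) -> fsum l a = fsum l b.
Proof.
  induction l as [|g l IH]; intros H; [reflexivity|]. unfold fsum in *; simpl.
  rewrite H by (left; reflexivity). rewrite IH by (intros; apply H; right; assumption).
  reflexivity.
Qed.

Lemma fsum_le l a b : (forall g, In g l -> a g <= b g) -> fsum l a <= fsum l b.
Proof.
  induction l as [|g l IH]; intros H; unfold fsum in *; simpl; [lra|].
  assert (a g <= b g) by (apply H; left; auto).
  assert (fold_right (fun g acc => a g + acc) 0 l <= fold_right (fun g acc => b g + acc) 0 l)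
    by (apply IH; intros; apply H; right; auto).
  lra.
Qed.

Lemma fsum_nonneg l a : (forall g, 0 <= a g) -> 0 <= fsum l a.
Proof. intros H; induction l as [|g l IH]; unfold fsum in *; simpl; [lra|]. specialize (H g); lra. Qed.

Lemma fsum_plus l a b : fsum l (fun g => a g + b g) = fsum l a + fsum l b.
Proof. induction l as [|g l IH]; unfold fsum in *; simpl; [lra|]. rewrite IH; lra. Qed.

Lemma fsum_scal l c a : fsum l (fun g => c * a g) = c * fsum l a.
Proof. induction l as [|g l IH]; unfold fsum in *; simpl; [lra|]. rewrite IH; lra. Qed.

Lemma fsum_const l c : fsum l (fun _ => c) = INR (length l) * c.
Proof.
  induction l as [|g l IH]; unfold fsum in *; simpl; [ring|].
  rewrite IH. destruct (length l); simpl; ring.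
Qed.

Lemma fsum_zero l a : (forall g, In g l -> a g = 0) -> fsum l a = 0.
Proof. intros H. rewrite (fsum_ext_in l a (fun _ => 0)), fsum_const by exact H. ring. Qed.

Lemma NoDup_incl_split l1 l2 : NoDup l1 -> NoDup l2 -> incl l1 l2 ->
  exists r, Permutation l2 (l1 ++ r) /\ forall g, In g r -> ~ In g l1.
Proof.
  intros N1 N2 I.
  set (outside := fun g => if excluded_middle_informative (In g l1) then false else true).
  assert (Hout : forall g, outside g = true <-> ~ In g l1).
  { intros g; unfold outside; destruct excluded_middle_informative; intuition discriminate. }
  assert (N : NoDup (l1 ++ filter outside l2)).
  { apply NoDup_app; [exact N1|apply NoDup_filter, N2|].
    intros g H1 H2. apply filter_In in H2. apply (proj1 (Hout g)); tauto. }
  exists (filter outside l2); split.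
  2:{ intros g Hg. apply Hout. exact (proj2 (proj1 (filter_In _ _ _) Hg)). }
  apply NoDup_Permutation; [exact N2|exact N|]. intros g.
  rewrite in_app_iff, filter_In, Hout. split.
  - intros H. destruct (classic (In g l1)); tauto.
  - intros [H|H]; [apply I|]; tauto.
Qed.

Lemma NoDup_common_extension l1 l2 : exists u, NoDup u /\ incl l1 u /\ incl l2 u.
Proof.
  exists (nodup (fun x y : G => excluded_middle_informative (x = y)) (l1 ++ l2)).
  split; [apply NoDup_nodup|]. split; apply nodup_incl; intros g Hg; apply in_app_iff; tauto.
Qed.

Lemma fsum_incl_le l1 l2 a : (forall g, 0 <= a g) -> NoDup l1 -> NoDup l2 -> incl l1 l2 ->
  fsum l1 a <= fsum l2 a.
Proof.
  intros Ha N1 N2 I. destruct (NoDup_incl_split l1 l2 N1 N2 I) as [r [P _]].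
  rewrite (fsum_perm _ _ a P), fsum_app. pose proof (fsum_nonneg r a Ha). lra.
Qed.

End FiniteSums.

Section Summability.
Variable G : Type.
Implicit Types (a b : G -> R).

Lemma has_sum_unique a s t : has_sum a s -> has_sum a t -> s = t.
Proof.
  intros Hs Ht. destruct (Req_dec s t) as [|Hne]; [assumption|]. exfalso.
  assert (Hp : 0 < Rabs (s - t)) by (apply Rabs_pos_lt; lra).
  destruct (Hs (Rabs (s - t) / 2)) as [F0 [_ H0]]; [lra|].
  destruct (Ht (Rabs (s - t) / 2)) as [F1 [_ H1]]; [lra|].
  destruct (NoDup_common_extension G F0 F1) as [U [NU [I0 I1]]].
  specialize (H0 U NU I0). specialize (H1 U NU I1).
  pose proof (Rabs_triang (s - fsum U a) (fsum U a - t)) as Htr.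
  replace (s - fsum U a + (fsum U a - t)) with (s - t) in Htr by ring.
  rewrite Rabs_minus_sym in H0. lra.
Qed.

Lemma has_sum_tsum a s : has_sum a s -> tsum a = s.
Proof.
  intros H. apply (has_sum_unique a); [|exact H].
  apply (epsilon_spec (inhabits 0) (fun s => has_sum a s)). eauto.
Qed.

Lemma has_sum_ext a b s : (forall g, a g = b g) -> has_sum a s -> has_sum b s.
Proof. intros H. replace b with a by (apply functional_extensionality; exact H). auto. Qed.

Lemma has_sum_plus a b s t : has_sum a s -> has_sum b t -> has_sum (fun g => a g + b g) (s + t).
Proof.
  intros Ha Hb eps He.
  destruct (Ha (eps / 2)) as [F0 [_ H0]]; [lra|].
  destruct (Hb (eps / 2)) as [F1 [_ H1]]; [lra|].
  destruct (NoDup_common_extension G F0 F1) as [U [NU [I0 I1]]].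
  exists U; split; [exact NU|]. intros F NF IU.
  specialize (H0 F NF (incl_tran I0 IU)). specialize (H1 F NF (incl_tran I1 IU)).
  rewrite fsum_plus.
  pose proof (Rabs_triang (fsum F a - s) (fsum F b - t)) as Htr.
  replace (fsum F a - s + (fsum F b - t)) with (fsum F a + fsum F b - (s + t)) in Htr by ring.
  lra.
Qed.

Lemma has_sum_scal a s c : has_sum a s -> has_sum (fun g => c * a g) (c * s).
Proof.
  intros Ha eps He. pose proof (Rabs_pos c) as Hc.
  destruct (Ha (eps / (Rabs c + 1))) as [F0 [N0 H0]]; [apply Rdiv_lt_0_compat; lra|].
  exists F0; split; [exact N0|]. intros F NF I. specialize (H0 F NF I).
  rewrite fsum_scal. replace (c * fsum F a - c * s) with (c * (fsum F a - s)) by ring.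
  rewrite Rabs_mult. pose proof (Rabs_pos (fsum F a - s)).
  assert (Rabs (fsum F a - s) * (Rabs c + 1) < eps).
  { apply (Rmult_lt_compat_r (Rabs c + 1)) in H0; [|lra].
    unfold Rdiv in H0. rewrite Rmult_assoc, Rinv_l in H0; lra. }
  nra.
Qed.

Lemma has_sum_minus a b s t : has_sum a s -> has_sum b t -> has_sum (fun g => a g - b g) (s - t).
Proof.
  intros Ha Hb. replace (s - t) with (s + -1 * t) by ring.
  apply (has_sum_ext (fun g => a g + -1 * b g)); [intros; ring|].
  apply has_sum_plus, has_sum_scal; assumption.
Qed.

Lemma has_sum_finite a L : NoDup L -> (forall g, ~ In g L -> a g = 0) -> has_sum a (fsum L a).
Proof.
  intros NL Hz eps He. exists L; split; [exact NL|]. intros F NF I.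
  destruct (NoDup_incl_split G L F NL NF I) as [r [P Nr]].
  rewrite (fsum_perm _ _ _ a P), fsum_app, (fsum_zero G r a).
  - rewrite Rplus_0_r, Rminus_diag, Rabs_R0; lra.
  - intros g Hg. apply Hz, Nr, Hg.
Qed.

Lemma has_sum_zero a : (forall g, a g = 0) -> has_sum a 0.
Proof. intros H. apply (has_sum_finite a nil); [constructor|auto]. Qed.

Lemma has_sum_ge_fsum a s F : (forall g, 0 <= a g) -> has_sum a s -> NoDup F -> fsum F a <= s.
Proof.
  intros Hp Ha NF. apply Rnot_lt_le; intros Hl.
  destruct (Ha (fsum F a - s)) as [F0 [_ H0]]; [lra|].
  destruct (NoDup_common_extension G F0 F) as [U [NU [I0 I1]]].
  specialize (H0 U NU I0). pose proof (fsum_incl_le G F U a Hp NF NU I1).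
  pose proof (Rle_abs (fsum U a - s)). lra.
Qed.

Lemma has_sum_nonneg a s : (forall g, 0 <= a g) -> has_sum a s -> 0 <= s.
Proof. intros Hp Ha. exact (has_sum_ge_fsum a s nil Hp Ha (NoDup_nil _)). Qed.

Lemma has_sum_ge_term a s g : (forall g, 0 <= a g) -> has_sum a s -> a g <= s.
Proof.
  intros Hp Ha. pose proof (has_sum_ge_fsum a s (g :: nil) Hp Ha) as H.
  unfold fsum in H; simpl in H. assert (NoDup (g :: nil)) by (repeat constructor; auto).
  specialize (H H0). lra.
Qed.

Lemma has_sum_le a b s t : (forall g, a g <= b g) -> has_sum a s -> has_sum b t -> s <= t.
Proof.
  intros Hab Ha Hb. apply Rnot_lt_le; intros Hl.
  destruct (Ha ((s - t) / 2)) as [F0 [_ H0]]; [lra|].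
  destruct (Hb ((s - t) / 2)) as [F1 [_ H1]]; [lra|].
  destruct (NoDup_common_extension G F0 F1) as [U [NU [I0 I1]]].
  specialize (H0 U NU I0). specialize (H1 U NU I1).
  pose proof (fsum_le G U a b (fun g _ => Hab g)).
  apply Rabs_def2 in H0. apply Rabs_def2 in H1. lra.
Qed.

Lemma has_sum_abs_le a b s t : (forall g, Rabs (a g) <= b g) ->
  has_sum a s -> has_sum b t -> Rabs s <= t.
Proof.
  intros H Ha Hb. apply Rabs_le. split.
  - replace (- t) with (-1 * t) by ring.
    apply (has_sum_le (fun g => -1 * b g) a); [|apply has_sum_scal|]; auto.
    intros g. specialize (H g). pose proof (Rle_abs (- a g)). rewrite Rabs_Ropp in *. lra.
  - apply (has_sum_le a b); auto. intros g. specialize (H g). pose proof (Rle_abs (a g)); lra.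
Qed.

(* The sum is the supremum of the finite partial sums, which exists by completeness of R. *)
Lemma summable_of_bounded_fsums a B : (forall g, 0 <= a g) ->
  (forall F, NoDup F -> fsum F a <= B) -> exists s, has_sum a s.
Proof.
  intros Hp HB.
  set (E := fun r => exists F, NoDup F /\ r = fsum F a).
  assert (bE : bound E) by (exists B; intros r [F [NF ->]]; auto).
  assert (nE : exists x, E x) by (exists 0, nil; split; [constructor|reflexivity]).
  destruct (completeness E bE nE) as [m [Hub Hlub]].
  exists m. intros eps He.
  assert (exists F, NoDup F /\ m - eps < fsum F a) as [F0 [N0 H0]].
  { apply NNPP; intros Hn. assert (m <= m - eps); [|lra].
    apply Hlub. intros r [F [NF ->]]. apply Rnot_lt_le. intros Hlt. apply Hn. eauto. }
  exists F0; split; [exact N0|]. intros F NF I.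
  pose proof (fsum_incl_le G F0 F a Hp N0 NF I).
  assert (fsum F a <= m) by (apply Hub; exists F; auto).
  apply Rabs_def1; lra.
Qed.

Lemma summable_le a b : (forall g, 0 <= b g <= a g) -> (exists s, has_sum a s) ->
  exists t, has_sum b t.
Proof.
  intros Hb [s Hs]. apply (summable_of_bounded_fsums b s); [intros g; apply Hb|].
  intros F NF. apply Rle_trans with (fsum F a).
  - apply fsum_le; intros; apply Hb.
  - apply has_sum_ge_fsum; auto. intros g; pose proof (Hb g); lra.
Qed.

End Summability.

Section L2.
Variable G : Type.
Implicit Types (x y : G -> R).

Lemma l2_lincomb x y a b : l2 x -> l2 y -> l2 (fun g => a * x g + b * y g).
Proof.
  intros [s Hs] [t Ht].
  apply (summable_le G (fun g => (2 * a ^ 2) * x g ^ 2 + (2 * b ^ 2) * y g ^ 2)).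
  - intros g. split; [apply pow2_ge_0|].
    pose proof (pow2_ge_0 (a * x g - b * y g)). nra.
  - eexists. apply has_sum_plus; apply has_sum_scal; eauto.
Qed.

Lemma l2_vadd x y : l2 x -> l2 y -> l2 (vadd x y).
Proof.
  intros. replace (vadd x y) with (fun g => 1 * x g + 1 * y g); [apply l2_lincomb; auto|].
  apply functional_extensionality; intros; unfold vadd; ring.
Qed.

Lemma l2_vsub x y : l2 x -> l2 y -> l2 (vsub x y).
Proof.
  intros. replace (vsub x y) with (fun g => 1 * x g + -1 * y g); [apply l2_lincomb; auto|].
  apply functional_extensionality; intros; unfold vsub; ring.
Qed.

Lemma l2_vscal c x : l2 x -> l2 (vscal c x).
Proof.
  intros. replace (vscal c x) with (fun g => c * x g + 0 * x g); [apply l2_lincomb; auto|].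
  apply functional_extensionality; intros; unfold vscal; ring.
Qed.

Lemma l2_vzero : l2 (@vzero G).
Proof. exists 0. apply has_sum_zero. intros; unfold vzero; ring. Qed.

Lemma l2norm_has_sum x : l2 x -> has_sum (fun g => x g ^ 2) (l2norm x ^ 2).
Proof.
  intros [s Hs]. unfold l2norm. rewrite (has_sum_tsum G _ s Hs), pow2_sqrt; [exact Hs|].
  exact (has_sum_nonneg G _ s (fun g => pow2_ge_0 _) Hs).
Qed.

Lemma vsub_vzero x : vsub x vzero = x.
Proof. apply functional_extensionality; intros; unfold vsub, vzero; ring. Qed.

End L2.

Lemma theta_nonneg t : 0 <= theta t.
Proof. unfold theta; destruct (Rle_dec t 0); [lra|apply pow2_ge_0]. Qed.

Lemma theta_le_sq t : theta t <= t ^ 2.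
Proof. unfold theta; destruct (Rle_dec t 0); [apply pow2_ge_0|lra]. Qed.

Lemma theta_pos t : 0 < t -> theta t = t ^ 2.
Proof. unfold theta; destruct (Rle_dec t 0); [lra|reflexivity]. Qed.

Lemma theta_nonpos t : t <= 0 -> theta t = 0.
Proof. unfold theta; destruct (Rle_dec t 0); [reflexivity|lra]. Qed.

Lemma theta_convex a b lam : 0 <= lam <= 1 ->
  theta (lam * a + (1 - lam) * b) <= lam * theta a + (1 - lam) * theta b.
Proof.
  intros Hl. unfold theta.
  assert (0 <= lam * (1 - lam)) by nra.
  pose proof (pow2_ge_0 a). pose proof (pow2_ge_0 b). pose proof (pow2_ge_0 (a - b)).
  destruct (Rle_dec (lam * a + (1 - lam) * b) 0);
  destruct (Rle_dec a 0); destruct (Rle_dec b 0); try nra.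
  - assert (0 < lam * a + (1 - lam) * b <= (1 - lam) * b) by nra.
    assert ((lam * a + (1 - lam) * b) ^ 2 <= ((1 - lam) * b) ^ 2) by nra. nra.
  - assert (0 < lam * a + (1 - lam) * b <= lam * a) by nra.
    assert ((lam * a + (1 - lam) * b) ^ 2 <= (lam * a) ^ 2) by nra. nra.
Qed.

(* The difference is at most (a - b)^2 + 2 |b| |a - b|; AM-GM splits the cross term. *)
Lemma theta_diff_le a b c : 0 < c ->
  Rabs (theta a - theta b) <= (1 + / c) * (a - b) ^ 2 + c * b ^ 2.
Proof.
  intros Hc.
  assert (Hq : 2 * Rabs b * Rabs (a - b) <= / c * (a - b) ^ 2 + c * b ^ 2).
  { assert (0 < / c) by (apply Rinv_0_lt_compat; lra).
    rewrite <- (pow2_abs (a - b)), <- (pow2_abs b).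
    assert (/ c * Rabs (a - b) ^ 2 + c * Rabs b ^ 2 - 2 * Rabs b * Rabs (a - b)
            = / c * (Rabs (a - b) - c * Rabs b) ^ 2) by (field; lra).
    pose proof (pow2_ge_0 (Rabs (a - b) - c * Rabs b)). nra. }
  assert (Rabs (theta a - theta b) <= (a - b) ^ 2 + 2 * Rabs b * Rabs (a - b)); [|lra].
  unfold theta. destruct (Rle_dec a 0); destruct (Rle_dec b 0);
  unfold Rabs; repeat destruct Rcase_abs; nra.
Qed.

Section FTheta.
Variable G : Type.
Implicit Types (x y v : G -> R).

Lemma theta_summable x : l2 x -> exists s, has_sum (fun g => theta (x g)) s.
Proof. intros Hx. apply (summable_le G (fun g => x g ^ 2)); [|exact Hx].
  intros g; split; [apply theta_nonneg|apply theta_le_sq]. Qed.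

Lemma fth_has_sum x : l2 x -> has_sum (fun g => theta (x g)) (fth x).
Proof.
  intros Hx. destruct (theta_summable x Hx) as [s Hs].
  unfold fth. rewrite (has_sum_tsum G _ s Hs). exact Hs.
Qed.

Lemma fth_nonpos x : (forall g, x g <= 0) -> fth x = 0.
Proof. intros H. apply has_sum_tsum, has_sum_zero. intros; apply theta_nonpos, H. Qed.

Lemma fth_bounds x : l2 x -> 0 <= fth x <= l2norm x ^ 2.
Proof.
  intros Hx. pose proof (fth_has_sum x Hx) as Hf. split.
  - exact (has_sum_nonneg G _ _ (fun g => theta_nonneg _) Hf).
  - exact (has_sum_le G _ _ _ _ (fun g => theta_le_sq _) Hf (l2norm_has_sum G x Hx)).
Qed.

Lemma fth_convex : l2_convex (@fth G).
Proof.
  intros x y Hx Hy lam Hl.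
  pose proof (l2_vadd G _ _ (l2_vscal G lam x Hx) (l2_vscal G (1 - lam) y Hy)) as Hz.
  apply (has_sum_le G _ _ _ _ (fun g => theta_convex (x g) (y g) lam Hl) (fth_has_sum _ Hz)).
  apply has_sum_plus; apply has_sum_scal; apply fth_has_sum; assumption.
Qed.

Lemma fth_diff_le x y c : l2 x -> l2 y -> 0 < c ->
  Rabs (fth y - fth x) <= (1 + / c) * l2norm (vsub y x) ^ 2 + c * l2norm x ^ 2.
Proof.
  intros Hx Hy Hc.
  apply (has_sum_abs_le G (fun g => theta (y g) - theta (x g))
           (fun g => (1 + / c) * vsub y x g ^ 2 + c * x g ^ 2)).
  - intros g. apply theta_diff_le, Hc.
  - apply has_sum_minus; apply fth_has_sum; assumption.
  - apply has_sum_plus; apply has_sum_scal, l2norm_has_sum; [apply l2_vsub|]; assumption.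
Qed.

Lemma fth_continuous : l2_continuous (@fth G).
Proof.
  intros x Hx eps He.
  set (X := l2norm x ^ 2). assert (HX : 0 <= X) by apply pow2_ge_0.
  set (c := eps / (2 * (X + 1))).
  assert (Hc : 0 < c) by (apply Rdiv_lt_0_compat; lra).
  assert (HcX : c * X < eps / 2).
  { unfold c. apply (Rmult_lt_reg_r (2 * (X + 1))); [lra|]. field_simplify; lra. }
  assert (Hic : 0 < 1 + / c) by (pose proof (Rinv_0_lt_compat c Hc); lra).
  set (r := eps / (2 * (1 + / c))). assert (Hr : 0 < r) by (apply Rdiv_lt_0_compat; lra).
  exists (sqrt r). split; [apply sqrt_lt_R0, Hr|]. intros y Hy Hn.
  pose proof (fth_diff_le x y c Hx Hy Hc) as Hdiff. fold X in Hdiff.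
  assert (Hsq : l2norm (vsub y x) ^ 2 < r).
  { rewrite <- (pow2_sqrt r) by lra.
    assert (0 <= l2norm (vsub y x)) by apply sqrt_pos. nra. }
  assert ((1 + / c) * l2norm (vsub y x) ^ 2 < eps / 2).
  { replace (eps / 2) with ((1 + / c) * r) by (unfold r; field; lra). nra. }
  lra.
Qed.

Lemma fth_unbounded_on_line x v g : l2 x -> l2 v -> v g <> 0 ->
  exists t, fth x < fth (vadd x (vscal t v)).
Proof.
  intros Hx Hv Hg. set (F := fth x). pose proof (proj1 (fth_bounds x Hx)) as HF.
  set (t := (sqrt F + 1 - x g) / v g). exists t.
  assert (Hw : l2 (vadd x (vscal t v))) by (apply l2_vadd, l2_vscal; assumption).
  pose proof (has_sum_ge_term G _ _ g (fun g => theta_nonneg _) (fth_has_sum _ Hw)) as Hge.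
  cbv beta in Hge.
  replace (vadd x (vscal t v) g) with (sqrt F + 1) in Hge
    by (unfold vadd, vscal, t; field; exact Hg).
  pose proof (sqrt_pos F). rewrite theta_pos in Hge by lra.
  pose proof (pow2_sqrt F HF). fold F. nra.
Qed.

Lemma fth_not_constant_on_line x v : l2 x -> l2 v -> (exists g, v g <> 0) ->
  ~ (forall t, fth (vadd x (vscal t v)) = fth x).
Proof.
  intros Hx Hv [g Hg] H. destruct (fth_unbounded_on_line x v g Hx Hv Hg) as [t Ht].
  rewrite H in Ht. lra.
Qed.

Lemma fth_lineality_trivial v : l2 v ->
  (forall t, fth (vscal t v) - fth (@vzero G) - l2inner (@vzero G) (vscal t v) = 0)
  <-> (forall g, v g = 0).
Proof.
  intros Hv.
  assert (E0 : fth (@vzero G) = 0) by (apply fth_nonpos; intros; unfold vzero; lra).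
  assert (E1 : forall t, l2inner (@vzero G) (vscal t v) = 0).
  { intros t. apply has_sum_tsum, has_sum_zero. intros; unfold vzero; ring. }
  split.
  - intros H g. destruct (Req_dec (v g) 0) as [|Hg]; [assumption|]. exfalso.
    destruct (fth_unbounded_on_line vzero v g (l2_vzero G) Hv Hg) as [t Ht].
    specialize (H t). rewrite E0, E1 in H.
    replace (vadd vzero (vscal t v)) with (vscal t v) in Ht
      by (apply functional_extensionality; intros; unfold vadd, vzero; ring).
    lra.
  - intros H t. rewrite E0, E1, fth_nonpos; [ring|].
    intros g; unfold vscal; rewrite H; lra.
Qed.

End FTheta.

Section CountableUnions.
Variable G : Type.

Lemma covering_list_of_bounded_NoDup (P : G -> Prop) B :
  (forall L, NoDup L -> (forall g, In g L -> P g) -> INR (length L) <= B) ->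
  exists L, forall g, P g -> In g L.
Proof.
  intros HB. apply NNPP; intros Hcov.
  assert (Hlong : forall m, exists L, NoDup L /\ (forall g, In g L -> P g) /\ length L = m).
  { induction m as [|m [L [NL [PL HL]]]].
    - exists nil; repeat split; [constructor|intros g []].
    - assert (exists g, P g /\ ~ In g L) as [g [Pg Ng]].
      { apply NNPP; intros Hn. apply Hcov. exists L. intros g Pg.
        apply NNPP; intros Ng. apply Hn; eauto. }
      exists (g :: L); repeat split.
      + constructor; assumption.
      + intros h [<-|Hh]; auto.
      + simpl; rewrite HL; reflexivity. }
  destruct (INR_unbounded B) as [m Hm].
  destruct (Hlong m) as [L [NL [PL HL]]].
  specialize (HB L NL PL). rewrite HL in HB. lra.
Qed.

(* Code g by its layer n and its position in a list covering layer n. *)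
Lemma injection_nat_of_finite_layers (P : nat -> G -> Prop) :
  (forall g, exists n, P n g) -> (forall n, exists L, forall g, P n g -> In g L) ->
  exists e : G -> nat, forall a b, e a = e b -> a = b.
Proof.
  intros Hlayer Hfin.
  destruct (choice _ Hlayer) as [N HN].
  destruct (choice _ Hfin) as [Lf HLf].
  assert (Hpos : forall g, exists i, (i < length (Lf (N g)))%nat /\ nth i (Lf (N g)) g = g)
    by (intros g; apply In_nth, HLf, HN).
  destruct (choice _ Hpos) as [I HI].
  exists (fun g => Cantor.to_nat (N g, I g)). intros a b E.
  apply (f_equal Cantor.of_nat) in E. rewrite !Cantor.cancel_of_to in E.
  injection E as EN EI.
  destruct (HI a) as [Ha1 Ha2]. destruct (HI b) as [_ Hb2].
  rewrite <- EN, <- EI in Hb2. rewrite <- Hb2, <- Ha2 at 1. apply nth_indep, Ha1.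
Qed.

End CountableUnions.

Section LinearForms.
Variable G : Type.

Definition indic (L : list G) : G -> R :=
  fun g => if excluded_middle_informative (In g L) then 1 else 0.

Lemma indic_in L g : In g L -> indic L g = 1.
Proof. unfold indic; destruct excluded_middle_informative; tauto. Qed.

Lemma indic_notin L g : ~ In g L -> indic L g = 0.
Proof. unfold indic; destruct excluded_middle_informative; tauto. Qed.

Lemma l2norm_scal_indic s L : NoDup L ->
  l2norm (vscal s (indic L)) = sqrt (INR (length L) * s ^ 2).
Proof.
  intros NL. unfold l2norm. f_equal. apply has_sum_tsum.
  rewrite <- fsum_const with (l := L).
  replace (fsum L (fun _ => s ^ 2)) with (fsum L (fun g => vscal s (indic L) g ^ 2)).
  - apply has_sum_finite; [exact NL|]. intros g Hg. unfold vscal. rewrite indic_notin; [ring|exact Hg].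
  - apply fsum_ext_in. intros g Hg. unfold vscal. rewrite indic_in; [ring|exact Hg].
Qed.

Lemma indic_l2 L : NoDup L -> l2 (indic L).
Proof.
  intros NL. exists (fsum L (fun g => indic L g ^ 2)). apply has_sum_finite; [exact NL|].
  intros g Hg. rewrite indic_notin; [ring|exact Hg].
Qed.

Variable l : (G -> R) -> R.
Hypothesis l_linear : l2_linear l.

Lemma linear_vzero : l vzero = 0.
Proof.
  replace (@vzero G) with (vscal 0 (@vzero G)) at 1
    by (apply functional_extensionality; intros; unfold vscal, vzero; ring).
  rewrite (proj2 l_linear) by apply l2_vzero. ring.
Qed.

Lemma linear_indic L : NoDup L -> l (indic L) = fsum L (fun g => l (indic (g :: nil))).
Proof.
  induction L as [|a L IH]; intros NL.
  - replace (indic nil) with (@vzero G); [exact linear_vzero|].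
    apply functional_extensionality; intros g. rewrite indic_notin; [reflexivity|intros []].
  - apply NoDup_cons_iff in NL as [Ha NL].
    replace (indic (a :: L)) with (vadd (indic (a :: nil)) (indic L)).
    + rewrite (proj1 l_linear), IH by (try apply indic_l2; repeat constructor; auto).
      reflexivity.
    + apply functional_extensionality; intros g. unfold vadd.
      destruct (classic (g = a)) as [->|Hga].
      * rewrite (indic_in (a :: nil)), (indic_in (a :: L)), (indic_notin L) by (simpl; auto).
        ring.
      * rewrite (indic_notin (a :: nil)) by (simpl; intuition).
        destruct (classic (In g L)).
        -- rewrite !indic_in by (simpl; auto). ring.
        -- rewrite !indic_notin by (simpl; intuition). ring.
Qed.

(* Scale the indicator of k coordinates with l(e_g) >= c so that l takes the value 1 on it;
   its norm is 1 / (c sqrt k), which is below the modulus of continuity at 0 once k is large. *)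
Lemma continuous_linear_few_large_coords c : l2_continuous l -> 0 < c ->
  exists B, forall L, NoDup L -> (forall g, In g L -> c <= l (indic (g :: nil))) ->
    INR (length L) <= B.
Proof.
  intros Hcont Hc.
  destruct (Hcont vzero (l2_vzero G) 1 Rlt_0_1) as [d [Hd Hsmall]].
  exists (/ (c * d) ^ 2). intros L NL HL.
  set (k := INR (length L)). apply Rnot_lt_le; intros Hk.
  assert (Hcd : 0 < (c * d) ^ 2) by (apply pow_lt, Rmult_lt_0_compat; assumption).
  assert (Hk1 : 1 < k * (c * d) ^ 2).
  { apply (Rmult_lt_compat_r ((c * d) ^ 2)) in Hk; [|exact Hcd].
    rewrite Rinv_l in Hk by lra. exact Hk. }
  assert (Hk0 : 0 < k) by (pose proof (Rinv_0_lt_compat _ Hcd); lra).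
  set (s := / (c * k)).
  assert (Hs : s * (c * k) = 1) by (unfold s; field; lra).
  assert (Hs0 : 0 < s) by (apply Rinv_0_lt_compat; nra).
  specialize (Hsmall (vscal s (indic L)) (l2_vscal G s _ (indic_l2 L NL))).
  rewrite vsub_vzero, l2norm_scal_indic, linear_vzero, Rminus_0_r in Hsmall by exact NL.
  fold k in Hsmall.
  assert (Hnorm : sqrt (k * s ^ 2) < d).
  { rewrite <- (sqrt_pow2 d) by lra. apply sqrt_lt_1_alt. split; [nra|].
    apply (Rmult_lt_reg_r (c ^ 2 * k)); [nra|].
    replace (k * s ^ 2 * (c ^ 2 * k)) with ((s * (c * k)) ^ 2) by ring. rewrite Hs. nra. }
  specialize (Hsmall Hnorm).
  rewrite (proj2 l_linear), linear_indic in Hsmall by (try apply indic_l2; exact NL).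
  assert (Hsum : k * c <= fsum L (fun g => l (indic (g :: nil)))).
  { unfold k. rewrite <- fsum_const. apply fsum_le, HL. }
  apply Rabs_def2 in Hsmall. nra.
Qed.

(* f vanishes on -t e_g for t >= 0, so coercivity of f - l along -e_g needs l(e_g) > 0. *)
Lemma coercive_tilt_positive_on_basis :
  l2_dir_coercive (fun x => fth x - l x) -> forall g, 0 < l (indic (g :: nil)).
Proof.
  intros Hco g. set (e := indic (g :: nil)).
  assert (He : l2 e) by (apply indic_l2; repeat constructor; auto).
  assert (Hv : exists h, vscal (-1) e h <> 0).
  { exists g. unfold vscal, e. rewrite indic_in by (left; reflexivity). lra. }
  destruct (Hco vzero (vscal (-1) e) (l2_vzero G) (l2_vscal G _ _ He) Hv 0) as [T HT].
  set (t := Rmax T 0). specialize (HT t (Rle_ge _ _ (Rmax_l T 0))).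
  assert (Ht : 0 <= t) by apply Rmax_r.
  rewrite fth_nonpos in HT.
  2:{ intros h. unfold vadd, vzero, vscal, e, indic. destruct excluded_middle_informative; nra. }
  rewrite (proj1 l_linear), linear_vzero, !(proj2 l_linear) in HT
    by first [apply l2_vzero | apply l2_vscal, l2_vscal, He | apply l2_vscal, He | exact He].
  nra.
Qed.

End LinearForms.

Lemma no_linear_form_with_coercive_tilt (G : Type) : uncountable G ->
  ~ (exists l : (G -> R) -> R,
       l2_linear l /\ l2_continuous l /\ l2_dir_coercive (fun x => fth x - l x)).
Proof.
  intros HG [l [Hlin [Hcont Hco]]]. apply HG.
  apply (injection_nat_of_finite_layers G (fun n g => / INR (S n) <= l (indic G (g :: nil)))).
  - intros g. destruct (archimed_cor1 _ (coercive_tilt_positive_on_basis G l Hlin Hco g))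
      as [N [HN HN0]].
    exists (pred N). rewrite Nat.succ_pred_pos by exact HN0. lra.
  - intros n. assert (Hn : 0 < / INR (S n)) by (apply Rinv_0_lt_compat, lt_0_INR, Nat.lt_0_succ).
    destruct (continuous_linear_few_large_coords G l Hlin _ Hcont Hn) as [B HB].
    exact (covering_list_of_bounded_NoDup G _ B HB).
Qed.

Theorem mainTheorem9 (G : Type) (HG : uncountable G) :
  (* f is well defined on Z *)
  (forall x : G -> R, l2 x -> exists s, has_sum (fun g => theta (x g)) s) /\
  l2_continuous (@fth G) /\
  l2_convex (@fth G) /\
  (forall x : G -> R, l2 x -> 0 <= fth x <= (l2norm x) ^ 2) /\
  (* f is not constant on any line x + R v, v <> 0 *)
  (forall x v : G -> R, l2 x -> l2 v -> (exists g, v g <> 0) ->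
     ~ (forall t, fth (vadd x (vscal t v)) = fth x)) /\
  (* Y_f = {0} *)
  (forall v : G -> R, l2 v ->
     ((forall t, fth (vscal t v) - fth (@vzero G) - l2inner (@vzero G) (vscal t v) = 0)
      <-> (forall g, v g = 0))) /\
  (* no continuous linear form l with f - l directionally coercive *)
  ~ (exists l : (G -> R) -> R,
       l2_linear l /\ l2_continuous l /\ l2_dir_coercive (fun x => fth x - l x)).
Proof.
  split; [exact (theta_summable G)|].
  split; [exact (fth_continuous G)|].
  split; [exact (fth_convex G)|].
  split; [exact (fth_bounds G)|].
  split; [exact (fth_not_constant_on_line G)|].
  split; [exact (fth_lineality_trivial G)|].
  exact (no_linear_form_with_coercive_tilt G HG).
Qed.
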